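(* Let $X$ be an infinite-dimensional first-countable topological vector space over $\mathbb{K}$, let $M\subset X$ and let $\alpha\ge\aleph_0$ be a cardinal. Then: (i) $M$ is $\alpha$-dense-lineable if and only if $M$ is $\alpha$-infinitely $\alpha$-dense-lineable; (ii) $M$ is pointwise $\alpha$-dense-lineable if and only if $M$ is $\alpha$-infinitely pointwise $\alpha$-dense-lineable; (iii) for every cardinal $\gamma<\alpha$, $M$ is $(\gamma,\alpha)$-dense-lineable if and only if $M$ is $\alpha$-infinitely $(\gamma,\alpha)$-dense-lineable.
   Context: $M$ is $\alpha$-dense-lineable if there is a dense linear subspace $Y$ of $X$ with $\dim(Y)=\alpha$ and $Y\subset M\cup\{0\}$; it is $\alpha$-infinitely $\alpha$-dense-lineable if there is a family $\{Y_\kappa\}_{\kappa<\alpha}$ of dense $\alpha$-dimensional subspaces of $X$ contained in $M\cup\{0\}$ with $Y_{\kappa_1}\cap Y_{\kappa_2}=\{0\}$ for $\kappa_1\ne\kappa_2$. $M$ is $\gamma$-lineable if some $\gamma$-dimensional subspace lies in $M\cup\{0\}$. $M$ is pointwise $\alpha$-dense-lineable if for each $x\in M$ there is a dense $\alpha$-dimensional subspace $Y$ with $x\in Y\subset M\cup\{0\}$; it is $\alpha$-infinitely pointwise $\alpha$-dense-lineable if for each $x\in M$ there is a family $\{Y_\kappa\}_{\kappa<\alpha}$ of dense $\alpha$-dimensional subspaces with $x\in Y_\kappa\subset M\cup\{0\}$ and $Y_{\kappa_1}\cap Y_{\kappa_2}=\mathrm{span}(x)$ for $\kappa_1\ne\kappa_2$.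 For $\gamma<\alpha$, $M$ is $(\gamma,\alpha)$-dense-lineable if $M$ is $\gamma$-lineable and every $\gamma$-dimensional subspace $W\subset M\cup\{0\}$ is contained in a dense $\alpha$-dimensional subspace $Y\subset M\cup\{0\}$; it is $\alpha$-infinitely $(\gamma,\alpha)$-dense-lineable if $M$ is $\gamma$-lineable and for every such $W$ there is a family $\{Y_\kappa\}_{\kappa<\alpha}$ of dense $\alpha$-dimensional subspaces with $W\subset Y_\kappa\subset M\cup\{0\}$ and $Y_{\kappa_1}\cap Y_{\kappa_2}=W$ for $\kappa_1\ne\kappa_2$. *)

(* K is the scalar field (instantiated with R and
   with the complex numbers R[i] over an arbitrary realType R). *)
From mathcomp Require Import all_boot all_algebra.
From mathcomp Require Import all_classical all_reals all_analysis.
From mathcomp Require Import complex.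
Import numFieldTopology.Exports.
Import GRing.Theory.

Set Implicit Arguments.
Unset Strict Implicit.
Unset Printing Implicit Defensive.

Local Open Scope classical_set_scope.
Local Open Scope ring_scope.

Section Lineability.
Variables (K : numFieldType) (X : topologicalLmodType K).

Definition lspan (S : set X) : set X :=
  [set x | exists (n : nat) (v : 'I_n -> X) (c : 'I_n -> K),
      (forall i, S (v i)) /\ x = \sum_(i < n) c i *: v i].

Definition lsubspace (Y : set X) : Prop :=
  Y 0 /\ forall (a : K) (x y : X), Y x -> Y y -> Y (a *: x + y).

Definition lin_indep (B : set X) : Prop :=
  forall (n : nat) (v : 'I_n -> X) (c : 'I_n -> K),
    injective v -> (forall i, B (v i)) ->
    \sum_(i < n) c i *: v i = 0 -> forall i, c i = 0.

Definition hamel_basis (Y B : set X) : Prop :=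
  B `<=` Y /\ lin_indep B /\ lspan B = Y.

(* Y is a linear subspace of dimension #|A| (the cardinal is represented by
   the type A) *)
Definition has_dim (Y : set X) (A : Type) : Prop :=
  lsubspace Y /\ exists B : set X, hamel_basis Y B /\ (B #= [set: A])%card.

Definition infinite_dimensional : Prop :=
  ~ exists (n : nat) (v : 'I_n -> X), lspan (range v) = [set: X].

Definition first_countable : Prop :=
  forall x : X, exists U : nat -> set X,
    (forall n, nbhs x (U n)) /\
    (forall V, nbhs x V -> exists n, U n `<=` V).

Definition good_subspace (M : set X) (A : Type) (Y : set X) : Prop :=
  has_dim Y A /\ dense Y /\ Y `<=` M `|` [set 0].

Definition lineable (G : Type) (M : set X) : Prop :=
  exists W : set X, has_dim W G /\ W `<=` M `|` [set 0].

Definition dense_lineable (A : Type) (M : set X) : Prop :=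
  exists Y : set X, good_subspace M A Y.

(* families indexed by A (a set of cardinality alpha, playing the role of
   the ordinals kappa < alpha) *)
Definition inf_dense_lineable (A : Type) (M : set X) : Prop :=
  exists Y : A -> set X,
    (forall k, good_subspace M A (Y k)) /\
    (forall k1 k2, k1 <> k2 -> Y k1 `&` Y k2 = [set 0]).

Definition pointwise_dense_lineable (A : Type) (M : set X) : Prop :=
  forall x, M x -> exists Y : set X, good_subspace M A Y /\ Y x.

Definition inf_pointwise_dense_lineable (A : Type) (M : set X) : Prop :=
  forall x, M x -> exists Y : A -> set X,
    (forall k, good_subspace M A (Y k) /\ Y k x) /\
    (forall k1 k2, k1 <> k2 -> Y k1 `&` Y k2 = lspan [set x]).

Definition gamma_alpha_dense_lineable (G A : Type) (M : set X) : Prop :=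
  lineable G M /\
  forall W : set X, has_dim W G -> W `<=` M `|` [set 0] ->
    exists Y : set X, good_subspace M A Y /\ W `<=` Y.

Definition inf_gamma_alpha_dense_lineable (G A : Type) (M : set X) : Prop :=
  lineable G M /\
  forall W : set X, has_dim W G -> W `<=` M `|` [set 0] ->
    exists Y : A -> set X,
      (forall k, good_subspace M A (Y k) /\ W `<=` Y k) /\
      (forall k1 k2, k1 <> k2 -> Y k1 `&` Y k2 = W).

End Lineability.

Definition corollary_for (K : numFieldType) : Prop :=
  forall (X : topologicalLmodType K) (M : set X) (A : Type),
    infinite_dimensional X -> first_countable X ->
    infinite_set [set: A] ->
    (dense_lineable A M <-> inf_dense_lineable A M) /\
    (pointwise_dense_lineable A M <-> inf_pointwise_dense_lineable A M) /\
    (forall G : Type, ([set: G] #<= [set: A])%card ->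
        ~ ([set: A] #<= [set: G])%card ->
      (gamma_alpha_dense_lineable G A M <->
       inf_gamma_alpha_dense_lineable G A M)).

(* Let Y be a dense alpha-dimensional subspace inside M u {0}, with Hamel basis
   B, and let W = span BW lie in the span of some B0 in B with |B0| < alpha.
   Since alpha * alpha * aleph0 * aleph0 = alpha (Hessenberg's theorem, proved
   below with Zorn's lemma), there are distinct basis vectors psi a k n in
   B \ B0, for a, k < alpha and n in nat, and nonzero scalars tau with
   tau * psi a k n in the n-th member of a countable neighbourhood base at 0.
   Writing b_a for the a-th vector of B, the space
     Z_k = span (BW u {b_a + tau * psi a k n | a, n})
   lies in Y, and its closure contains every b_a, so it is dense.  Choosing
   psi a k n one "level" above b_a makes these perturbed vectors triangular
   with respect to B, hence independent modulo span B0: this gives both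
   dim Z_k = alpha and Z_k n Z_l = W for k <> l. *)

From mathcomp Require Import all_boot all_algebra.
From mathcomp Require Import all_classical all_reals all_analysis.
From mathcomp Require Import complex.

Set Implicit Arguments.
Unset Strict Implicit.
Unset Printing Implicit Defensive.

Local Open Scope classical_set_scope.
Local Open Scope card_scope.

(** * Cardinal arithmetic *)

Definition inj_into T U (A : set T) (B : set U) (f : T -> U) :=
  (forall x, A x -> B (f x)) /\ (forall x y, A x -> A y -> f x = f y -> x = y).

Lemma partial_choice T U (R : T -> U -> Prop) (u0 : U) :
  exists f : T -> U, forall x, (exists y, R x y) -> R x (f x).
Proof.
exists (fun x => match pselect (exists y, R x y) with
                 | left h => proj1_sig (cid h) | right _ => u0 end).
move=> x h; case: pselect => [h'|//]; exact: proj2_sig (cid h').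
Qed.

Lemma inj_left_inverse T U (f : T -> U) (t0 : T) : injective f ->
  exists g : U -> T, cancel f g.
Proof.
move=> finj; have [g hg] := partial_choice (fun y x => f x = y) t0.
by exists g => x; apply: finj; apply: hg; exists x.
Qed.

Lemma card_leP_inj_into T U (A : set T) (B : set U) :
  A #<= B <-> A = set0 \/ exists f : T -> U, inj_into A B f.
Proof.
elim/Ppointed: U B => U B.
  rewrite card_le_emptyr; split => [/eqP ->|[->//|[f [fAB _]]]]; first by left.
  apply/eqP; rewrite -subset0 => x Ax; exact: (no (f x)).
split.
  move=> /pcard_leP /injfunPex [f fAB finj]; right; exists f; split => //.
  by move=> x y Ax Ay; apply: finj; rewrite inE.
move=> [->|[f [fAB finj]]]; first exact: card_ge0.
apply/pcard_leP/injfunPex; exists f => // x y; rewrite !inE; exact: finj.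
Qed.

Lemma card_le_inj_into T U (A : set T) (B : set U) (f : T -> U) :
  inj_into A B f -> A #<= B.
Proof. by move=> h; apply/card_leP_inj_into; right; exists f. Qed.

Lemma inj_into_card_le T U (A : set T) (B : set U) (u0 : U) : A #<= B ->
  exists f : T -> U, inj_into A B f.
Proof. by move=> /card_leP_inj_into [->|//]; exists (fun=> u0). Qed.

Lemma card_eq_bij T U (u0 : U) (A : set T) (B : set U) : A #= B ->
  exists f : T -> U, inj_into A B f /\ forall y, B y -> exists2 x, A x & f x = y.
Proof.
elim/Ppointed: U u0 B => U u0 B; first by case: (no u0).
move=> /pcard_eqP /bijPex [f [ff fi fs]]; exists f; split; first split.
- by move=> x Ax; apply: ff.
- by move=> x y Ax Ay; apply: fi; rewrite inE.
- by move=> y By; have [x Ax <-] := fs y By; exists x.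
Qed.

Section Comparability.
Variables (T U : Type) (A : set T) (B : set U).

Definition partial_matching (R : set (T * U)) :=
  [/\ R `<=` A `*` B, (forall x y y', R (x, y) -> R (x, y') -> y = y') &
      (forall x x' y, R (x, y) -> R (x', y) -> x = x')].

Lemma partial_matching_bigcup (F : set (set (T * U))) :
  F `<=` partial_matching -> total_on F subset ->
  partial_matching (\bigcup_(R in F) R).
Proof.
move=> FP Ftot; split.
- by move=> p [R FR Rp]; have [+ _ _] := FP R FR; apply.
- move=> x y y' [R1 F1 R1y] [R2 F2 R2y].
  have [R12|R21] := Ftot _ _ F1 F2.
    by have [_ h _] := FP R2 F2; apply: h (R12 _ R1y) R2y.
  by have [_ h _] := FP R1 F1; apply: h R1y (R21 _ R2y).
- move=> x x' y [R1 F1 R1y] [R2 F2 R2y].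
  have [R12|R21] := Ftot _ _ F1 F2.
    by have [_ _ h] := FP R2 F2; apply: h (R12 _ R1y) R2y.
  by have [_ _ h] := FP R1 F1; apply: h R1y (R21 _ R2y).
Qed.

Lemma card_le_matching (R : set (T * U)) : partial_matching R ->
  (forall x, A x -> exists y, R (x, y)) -> A #<= B.
Proof.
move=> [RAB Rf Ri] hA.
have [->|/set0P[x0 Ax0]] := eqVneq A set0; first exact: card_ge0.
have [y0 _] := hA x0 Ax0.
have [f hf] := partial_choice (fun x y => R (x, y)) y0.
apply: (@card_le_inj_into _ _ _ _ f); split.
  by move=> x Ax; have [_ +] := RAB _ (hf x (hA x Ax)).
move=> x x' Ax Ax' e; apply: (Ri x x' (f x)); first by apply: hf; apply: hA.
by rewrite e; apply: hf; apply: hA.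
Qed.

Lemma maximal_matching_covers (M : set (T * U)) : partial_matching M ->
  (forall N, M `<` N -> ~ partial_matching N) ->
  (forall x, A x -> exists y, M (x, y)) \/ (forall y, B y -> exists x, M (x, y)).
Proof.
move=> [MAB Mf Mi] Mmax.
have [h|/existsNP [x /not_implyP [Ax nx]]] :=
  pselect (forall x, A x -> exists y, M (x, y)); [by left|right => y By].
apply: contrapT => ny.
have nx' y' : ~ M (x, y') by move=> h; apply: nx; exists y'.
have ny' x' : ~ M (x', y) by move=> h; apply: ny; exists x'.
apply: (Mmax (M `|` [set (x, y)])).
  split; first by move=> p Mp; left.
  by move=> h; apply: (nx' y); apply: (h (x, y)); right.
split.
- by move=> p [/MAB//|->].
- move=> a b b' [Mab|[ea eb]] [Mab'|[ea' eb']]; subst => //.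
  + exact: Mf Mab Mab'.
  + by case: (nx' _ Mab).
  + by case: (nx' _ Mab').
- move=> a a' b [Mab|[ea eb]] [Mab'|[ea' eb']]; subst => //.
  + exact: Mi Mab Mab'.
  + by case: (ny' _ Mab).
  + by case: (ny' _ Mab').
Qed.

End Comparability.

Lemma card_le_total T U (A : set T) (B : set U) : A #<= B \/ B #<= A.
Proof.
have [M [hM Mmax]] : exists M, partial_matching A B M /\
    forall N, M `<` N -> ~ partial_matching A B N.
  by apply: Zorn_bigcup; exact: partial_matching_bigcup.
have [hA|hB] := maximal_matching_covers hM Mmax; first by left; apply: card_le_matching hM hA.
have [MAB Mf Mi] := hM; right; apply: (card_le_matching (R := [set p | M (p.2, p.1)])) hB.
split.
- by move=> [y x] /MAB [].
- by move=> y x x' /= h h'; apply: Mi h h'.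
- by move=> y y' x /= h h'; apply: Mf h h'.
Qed.

Section Hessenberg.
Variable T : pointedType.
Implicit Types R : set ((T * T) * T).

Definition rel_range R : set T := [set z | exists p, R (p, z)].

(* The graph of a bijection from S * S onto S, where S = rel_range R. *)
Definition pairing_graph R :=
  [/\ (forall p z z', R (p, z) -> R (p, z') -> z = z'),
      (forall p p' z, R (p, z) -> R (p', z) -> p = p') &
      (forall x y, (exists z, R ((x, y), z)) <-> rel_range R x /\ rel_range R y)].

Lemma rel_range_sub R R' : R `<=` R' -> rel_range R `<=` rel_range R'.
Proof. by move=> RR' z [p Rp]; exists p; apply: RR'. Qed.

Lemma pairing_graph_bigcup (F : set (set ((T * T) * T))) :
  F `<=` pairing_graph -> total_on F subset ->
  pairing_graph (\bigcup_(R in F) R).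
Proof.
move=> FP Ftot; split.
- move=> p z z' [Ra Fa Rap] [Rb Fb Rbp].
  have [ab|ba] := Ftot _ _ Fa Fb.
    by have [h _ _] := FP Rb Fb; apply: h (ab _ Rap) Rbp.
  by have [h _ _] := FP Ra Fa; apply: h Rap (ba _ Rbp).
- move=> p p' z [Ra Fa Rap] [Rb Fb Rbp].
  have [ab|ba] := Ftot _ _ Fa Fb.
    by have [_ h _] := FP Rb Fb; apply: h (ab _ Rap) Rbp.
  by have [_ h _] := FP Ra Fa; apply: h Rap (ba _ Rbp).
- move=> x y; split.
    move=> [z [R FR Rxy]]; have [_ _ h] := FP R FR.
    have [hx hy] := (h x y).1 (ex_intro _ z Rxy).
    by split; apply: (rel_range_sub (R := R)) => // q Rq; exists R.
  move=> [[px [Ra Fa Rax]] [py [Rb Fb Rby]]].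
  have [ab|ba] := Ftot _ _ Fa Fb.
    have [_ _ h] := FP Rb Fb.
    have [z Rz] := (h x y).2 (conj (ex_intro _ px (ab _ Rax)) (ex_intro _ py Rby)).
    by exists z, Rb.
  have [_ _ h] := FP Ra Fa.
  have [z Rz] := (h x y).2 (conj (ex_intro _ px Rax) (ex_intro _ py (ba _ Rby))).
  by exists z, Ra.
Qed.

Lemma pairing_graph_nat (g : nat -> T) : injective g ->
  exists R0, pairing_graph R0 /\ range g `<=` rel_range R0.
Proof.
move=> ginj; have [pi [[_ piinj] pisurj]] := card_eq_bij 0%N card_nat2.
pose R0 q := exists i j, q = ((g i, g j), g (pi (i, j))).
have rngR0 z : rel_range R0 z <-> exists k, z = g k.
  split; first by move=> [p [i [j [_ ->]]]]; exists (pi (i, j)).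
  move=> [k ->]; have [[i j] _ <-] := pisurj k I.
  by exists (g i, g j), i, j.
exists R0; split; last by move=> _ [k _ <-]; apply/rngR0; exists k.
split.
- move=> p z z' [i [j [-> ->]]] [i' [j' [[/ginj -> /ginj ->] ->]]].
  by [].
- move=> p p' z [i [j [-> ->]]] [i' [j' [-> /ginj]]].
  by move=> /(piinj _ _ I I) [-> ->].
- move=> x y; split.
    move=> [z [i [j [[-> ->] _]]]].
    by split; apply/rngR0; [exists i|exists j].
  move=> [/rngR0 [i ->] /rngR0 [j ->]]; exists (g (pi (i, j))); by exists i, j.
Qed.

Lemma pairing_graph0 : pairing_graph set0.
Proof. by split=> [p z z' []|p p' z []|x y]; split=> [[z []]|[[p []]]]. Qed.

Lemma pairing_graph_fun R : pairing_graph R -> exists m : T * T -> T,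
  forall x y, rel_range R x -> rel_range R y -> R ((x, y), m (x, y)).
Proof.
move=> [_ _ Rsq]; have [m hm] := partial_choice (fun (p : T * T) z => R (p, z)) point.
by exists m => x y Sx Sy; apply: hm; apply/Rsq.
Qed.

Section Extension.
Variables (M : set ((T * T) * T)) (T' : set T) (k : T * T -> T).
Let S := rel_range M.
Let D : set (T * T) := [set p | [/\ (S `|` T') p.1, (S `|` T') p.2 & ~ (S p.1 /\ S p.2)]].
Hypotheses (hM : pairing_graph M) (T'S : forall t, T' t -> ~ S t) (T'0 : T' !=set0)
  (kD : inj_into D T' k) (ksurj : forall t, T' t -> exists2 p, D p & k p = t).

Lemma pairing_graph_extend :
  exists2 M', M `<` M' & pairing_graph M'.
Proof.
have [Mf Mi Msq] := hM; have [kDT' kinj] := kD.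
pose M' : set ((T * T) * T) := M `|` [set q | D q.1 /\ q.2 = k q.1].
have rngM' w : rel_range M' w <-> (S `|` T') w.
  split; first by move=> [p [Mp|[Dp /= ->]]]; [left; exists p|right; exact: kDT'].
  move=> [[p Mp]|Tw]; first by exists p; left.
  by have [p Dp <-] := ksurj Tw; exists p; right.
have MS x y z : M ((x, y), z) -> S x /\ S y by move=> Mz; apply/Msq; exists z.
exists M'.
  split; first by move=> q Mq; left.
  have [t Tt] := T'0; have Dtt : D (t, t) by split; [right|right|move=> [/T'S]].
  move=> /(_ ((t, t), k (t, t)) (or_intror (conj Dtt erefl))) /MS [St _].
  exact: T'S Tt St.
split.
- move=> [x y] z z' [Mz|[[_ _ Dp] /= ->]] [Mz'|[[_ _ Dp'] /= ->]] //.
  + exact: Mf Mz Mz'.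
  + by case: Dp'; apply: MS Mz.
  + by case: Dp; apply: MS Mz'.
- move=> p p' z [Mz|[Dp /= ez]] [Mz'|[Dp' /= ez']].
  + exact: Mi Mz Mz'.
  + by case: (T'S (kDT' _ Dp')); rewrite -ez'; exists p.
  + by case: (T'S (kDT' _ Dp)); rewrite -ez; exists p'.
  + by apply: kinj => //; rewrite -ez -ez'.
- move=> x y; rewrite !rngM'; split.
    move=> [z [Mz|[[dx dy _] _]]] //.
    by have [Sx Sy] := MS _ _ _ Mz; split; left.
  move=> [dx dy]; have [[Sx Sy]|nS] := pselect (S x /\ S y).
    by have [z Mz] := (Msq x y).2 (conj Sx Sy); exists z; left.
  by exists (k (x, y)); right.
Qed.

End Extension.

Section MaximalGraph.
Variables (M : set ((T * T) * T)) (m : T * T -> T) (g0 g1 : T).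
Let S := rel_range M.
Hypotheses (hM : pairing_graph M)
  (mM : forall x y, S x -> S y -> M ((x, y), m (x, y)))
  (Sg0 : S g0) (Sg1 : S g1) (g01 : g0 <> g1).

Lemma pairing_in_range x y : S x -> S y -> S (m (x, y)).
Proof. by move=> Sx Sy; exists (x, y); apply: mM. Qed.

Lemma pairing_inj x y x' y' : S x -> S y -> S x' -> S y' ->
  m (x, y) = m (x', y') -> x = x' /\ y = y'.
Proof.
move=> Sx Sy Sx' Sy' e; have [_ Mi _] := hM.
have h1 := mM Sx Sy; rewrite e in h1.
by have := Mi _ _ _ h1 (mM Sx' Sy'); case=> -> ->.
Qed.

Lemma card_le_range_of_compl : ~` S #<= S -> [set: T] #<= S.
Proof.
have [Sfull|/set0P [c0 Sc0]] := eqVneq (~` S) set0.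
  move=> _; apply: (@card_le_inj_into _ _ _ _ id); split => // x _.
  by apply: contrapT => nSx; have : (~` S) x by []; rewrite Sfull.
move=> /(inj_into_card_le point) [h [hS hinj]].
apply: (@card_le_inj_into _ _ _ _ (fun x => if pselect (S x) then m (x, g0)
                                            else m (h x, g1))); split.
  by move=> x _; case: pselect => Sx; apply: pairing_in_range => //; apply: hS.
move=> x y _ _; case: pselect => Sx; case: pselect => Sy e.
- by have [] := pairing_inj Sx Sg0 Sy Sg0 e.
- by have [_ /g01] := pairing_inj Sx Sg0 (hS y Sy) Sg1 e.
- by have [_ /esym/g01] := pairing_inj (hS x Sx) Sg1 Sy Sg0 e.
- by have [/hinj + _] := pairing_inj (hS x Sx) Sg1 (hS y Sy) Sg1 e; apply.
Qed.

Lemma inj_setU_range (T' : set T) : T' #<= S -> exists e, inj_into (S `|` T') S e.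
Proof.
move=> /(inj_into_card_le point) [f [fS finj]].
exists (fun a => if pselect (S a) then m (a, g0) else m (f a, g1)); split.
  move=> a; case: pselect => Sa; first by move=> _; apply: pairing_in_range.
  by move=> [/Sa|/fS Sfa] //; apply: pairing_in_range.
move=> a a'; case: pselect => Sa; case: pselect => Sa' da da' e.
- by have [] := pairing_inj Sa Sg0 Sa' Sg0 e.
- by case: da' => // /fS Sfa'; have [_ /g01] := pairing_inj Sa Sg0 Sfa' Sg1 e.
- by case: da => // /fS Sfa; have [_ /esym/g01] := pairing_inj Sfa Sg1 Sa' Sg0 e.
- case: da da' => [//|Ta] [//|Ta'].
  by have [/(finj _ _ Ta Ta') + _] := pairing_inj (fS _ Ta) Sg1 (fS _ Ta') Sg1 e.
Qed.

(* If S embeds into its complement, pick a copy T' of S there: then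
   (S u T')^2 \ S^2 is equipotent to T', so M extends. *)
Lemma not_maximal_of_le_compl : S #<= ~` S ->
  exists2 M', M `<` M' & pairing_graph M'.
Proof.
move=> /(inj_into_card_le point) [h [hS hinj]].
pose T' := h @` S.
have T'S t : T' t -> ~ S t by move=> [s Ss <-]; apply: hS.
have [e [eS einj]] := inj_setU_range (card_image_le h S).
pose D : set (T * T) :=
  [set p | [/\ (S `|` T') p.1, (S `|` T') p.2 & ~ (S p.1 /\ S p.2)]].
have mS p : D p -> S (m (e p.1, e p.2)).
  by move=> [d1 d2 _]; apply: pairing_in_range; apply: eS.
have DT' : D #<= T'.
  apply: (@card_le_inj_into _ _ _ _ (fun p => h (m (e p.1, e p.2)))); split.
    by move=> p Dp; exists (m (e p.1, e p.2)) => //; apply: mS.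
  move=> [a b] [a' b'] Dp Dp' /(hinj _ _ (mS _ Dp) (mS _ Dp')).
  have [[da db _] [da' db' _]] := (Dp, Dp').
  move=> /(pairing_inj (eS _ da) (eS _ db) (eS _ da') (eS _ db')) [].
  by move=> /(einj _ _ da da') /= -> /(einj _ _ db db') /= ->.
have T'D : T' #<= D.
  apply: (@card_le_inj_into _ _ _ _ (fun t => (t, t))); split; last by move=> t t' _ _ [].
  by move=> t Tt; split; [right|right|move=> [/(T'S _ Tt)]].
have [k [kD ksurj]] := card_eq_bij point (Cantor_Bernstein DT' T'D).
by apply: (@pairing_graph_extend M T' k) => //; exists (h g0), g0.
Qed.

End MaximalGraph.

Lemma maximal_pairing_graph R0 : pairing_graph R0 -> R0 !=set0 ->
  exists2 M, R0 `<=` M /\ pairing_graph M & forall N, M `<` N -> ~ pairing_graph N.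
Proof.
move=> R0P [q0 R0q0]; pose P R := R = set0 \/ (R0 `<=` R /\ pairing_graph R).
have [M [PM Mmax]] : exists M, P M /\ forall N, M `<` N -> ~ P N.
  apply: Zorn_bigcup => F FP Ftot.
  have [allE|/existsNP [R1 /not_implyP [FR1 R1n0]]] :=
    pselect (forall R, F R -> R = set0).
    by left; apply/seteqP; split => // q [R FR]; rewrite (allE R FR).
  right; split.
    by case: (FP R1 FR1) => [//|[R01 _]] q R0q; exists R1 => //; apply: R01.
  by apply: pairing_graph_bigcup => // R /FP [->|[]//]; exact: pairing_graph0.
have [R0M hM] : R0 `<=` M /\ pairing_graph M.
  case: PM => // M0; exfalso; apply: (Mmax R0); last by right; split.
  by rewrite M0; split => // /(_ _ R0q0).
exists M => // N MN PN; apply: (Mmax N MN); right; split => //.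
exact: subset_trans R0M (proj1 MN).
Qed.

Theorem card_square_le : infinite_set [set: T] -> [set: T * T] #<= [set: T].
Proof.
move=> /infiniteP /(inj_into_card_le point) [g [_ ginj]].
have {}ginj : injective g by move=> i j /(ginj _ _ I I).
have [R0 [R0P gR0]] := pairing_graph_nat ginj.
have [p R0p] : exists p, R0 (p, g 0%N) by apply: gR0; exists 0%N.
have [M [R0M hM] Mmax] := maximal_pairing_graph R0P (ex_intro _ _ R0p).
pose S := rel_range M.
have gS i : S (g i) by apply: (rel_range_sub R0M); apply: gR0; exists i.
have g01 : g 0%N <> g 1%N by move=> /ginj.
have [m mM] := pairing_graph_fun hM.
suff /(inj_into_card_le point) [f [fS finj]] : [set: T] #<= S.
  apply: (@card_le_inj_into _ _ _ _ (fun p => m (f p.1, f p.2))).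
  split => // -[x y] [x' y'] _ _ /= /(pairing_inj hM mM) [] //; try exact: fS.
  by move=> /finj -> // /finj ->.
have [CS|SC] := card_le_total (~` S) S.
  exact: card_le_range_of_compl hM mM (gS 0%N) (gS 1%N) g01 CS.
by have [M' /Mmax] := not_maximal_of_le_compl hM mM (gS 0%N) (gS 1%N) g01 SC.
Qed.

End Hessenberg.

Lemma nat_injection T : infinite_set [set: T] -> exists nu : nat -> T, injective nu.
Proof.
move=> /infiniteP /card_leP_inj_into [nat0|[nu [_ nuinj]]].
  by have : [set: nat] 0%N by []; rewrite nat0.
by exists nu => x y /(nuinj _ _ I I).
Qed.

Lemma square_injection T : infinite_set [set: T] ->
  exists rho : T * T -> T, injective rho.
Proof.
elim/Ppointed: T => T Tinf.
  by case: Tinf; rewrite empty_eq0; exact: finite_set0.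
have [rho [_ rinj]] := inj_into_card_le point (card_square_le Tinf).
by exists rho => x y /(rinj _ _ I I).
Qed.

Lemma code_injection T : infinite_set [set: T] ->
  exists enc : T * T * nat * nat -> T, injective enc.
Proof.
move=> Tinf; have [rho rinj] := square_injection Tinf.
have [nu nuinj] := nat_injection Tinf.
exists (fun q => rho (rho (q.1.1.1, q.1.1.2), rho (nu q.1.2, nu q.2))).
move=> [[[a k] n] m] [[[a' k'] n'] m'] /= /rinj [/rinj [-> ->]].
by move=> /rinj [/nuinj -> /nuinj ->].
Qed.

Lemma card_setU_le T U (S1 S2 : set T) : infinite_set [set: U] ->
  S1 #<= [set: U] -> S2 #<= [set: U] -> S1 `|` S2 #<= [set: U].
Proof.
move=> Uinf S1U S2U; have [rho rinj] := square_injection Uinf.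
have [nu nuinj] := nat_injection Uinf.
have [f1 [_ f1inj]] := inj_into_card_le (nu 0%N) S1U.
have [f2 [_ f2inj]] := inj_into_card_le (nu 0%N) S2U.
apply: (@card_le_inj_into _ _ _ _ (fun x => if pselect (S1 x)
  then rho (f1 x, nu 0%N) else rho (f2 x, nu 1%N))); split => // x y Sx Sy.
case: pselect => S1x; case: pselect => S1y /rinj e.
- by case: e => /(f1inj _ _ S1x S1y).
- by case: e => _ /nuinj.
- by case: e => _ /nuinj.
- by case: Sx Sy e => [//|S2x] [//|S2y] [/(f2inj _ _ S2x S2y)].
Qed.

(* B splits into alpha columns of size alpha, which cannot all meet B0. *)
Lemma card_setD_ge T A (B B0 : set T) : infinite_set [set: A] ->
  B #= [set: A] -> ~ ([set: A] #<= B0) -> [set: A] #<= B `\` B0.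
Proof.
elim/Ppointed: T B B0 => T B B0 Ainf.
  by rewrite [B `\` B0]empty_eq0 [B]empty_eq0 => /card_eqPle [].
move=> /card_esym/card_eqPle [/(inj_into_card_le point) [b0 [b0B b0inj]] _] nAB0.
have [rho rinj] := square_injection Ainf.
have [[a col]|/forallNP hall] :=
  pselect (exists a, forall a', ~ B0 (b0 (rho (a, a')))).
  apply: (@card_le_inj_into _ _ _ _ (fun a' => b0 (rho (a, a')))); split.
    by move=> a' _; split; [apply: b0B|apply: col].
  by move=> x y _ _ /(b0inj _ _ I I) /rinj [].
have [a0 _] : [set: A] !=set0 by apply: infinite_setN0.
have [sel hsel] := partial_choice (fun a a' => B0 (b0 (rho (a, a')))) a0.
have hsel' a : B0 (b0 (rho (a, sel a))).
  by apply: hsel; have /existsNP [a' /contrapT] := hall a; exists a'.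
case: nAB0; apply: (@card_le_inj_into _ _ _ _ (fun a => b0 (rho (a, sel a)))).
by split => // x y _ _ /(b0inj _ _ I I) /rinj [].
Qed.

Lemma card_bigcup_finite_le I T G (D : set I) (F : I -> set T) :
  infinite_set [set: G] -> D #<= [set: G] ->
  (forall i, D i -> finite_set (F i)) -> \bigcup_(i in D) F i #<= [set: G].
Proof.
move=> Ginf DG Ffin; have [rho rinj] := square_injection Ginf.
have [nu nuinj] := nat_injection Ginf.
have [e [_ einj]] := inj_into_card_le (nu 0%N) DG.
have [f hf] := partial_choice
  (fun i (f : T -> nat) => D i -> inj_into (F i) [set: nat] f) (fun=> 0%N).
have {}hf i : D i -> inj_into (F i) [set: nat] (f i).
  move=> Di; apply: (hf i _ Di).
  have /finite_set_countable/(inj_into_card_le 0%N) [g hg] := Ffin i Di.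
  by exists g.
have [->|/set0P [i0 Di0]] := eqVneq D set0.
  by rewrite (_ : \bigcup_(i in set0) F i = set0) ?card_ge0 // -subset0 => x [].
have [idx hidx] := partial_choice (fun x i => D i /\ F i x) i0.
have {}hidx x : (\bigcup_(i in D) F i) x -> D (idx x) /\ F (idx x) x.
  by move=> [i Di Fix]; apply: hidx; exists i.
apply: (@card_le_inj_into _ _ _ _ (fun x => rho (e (idx x), nu (f (idx x) x)))).
split => // x y /hidx [Dx Fx] /hidx [Dy Fy] /rinj [/(einj _ _ Dx Dy) exy /nuinj].
by rewrite exy in Fx *; apply: (hf _ Dy).2.
Qed.

Import numFieldTopology.Exports.
Import GRing.Theory Num.Theory.
Local Open Scope ring_scope.

(** * Finite linear combinations *)

Lemma seq_argmax (T : eqType) (r : seq T) (P : pred T) (f : T -> nat) : has P r ->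
  exists2 x, (x \in r) && P x & forall y, y \in r -> P y -> (f y <= f x)%N.
Proof.
move=> /hasP [x0 x0r Px0]; pose Q n := has (fun x => P x && (f x == n)) r.
have Qf : Q (f x0) by apply/hasP; exists x0; rewrite ?Px0 ?eqxx.
have Qbound n : Q n -> (n <= \max_(x <- r) f x)%N.
  by move=> /hasP [x xr /andP [_ /eqP <-]]; apply: leq_bigmax_seq.
case: (@ex_maxnP Q _ (ex_intro Q _ Qf) Qbound) => n /hasP [x xr /andP [Px /eqP fx]] nmax.
exists x; first by rewrite xr Px.
by move=> y yr Py; rewrite fx; apply: nmax; apply/hasP; exists y; rewrite ?Py ?eqxx.
Qed.

Lemma big_pred1_seq (R : Type) (idx : R) (op : Monoid.com_law idx)
  (I : eqType) (r : seq I) (i : I) (F : I -> R) :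
  uniq r -> i \in r -> \big[op/idx]_(j <- r | j == i) F j = F i.
Proof.
move=> ur ir; rewrite -big_filter.
have -> : [seq j <- r | j == i] = [:: i].
  by rewrite -(filter_pred1_uniq ur ir); apply: eq_filter => j /=.
by rewrite big_seq1.
Qed.

Lemma big_partition_undup (R : Type) (idx : R) (op : Monoid.com_law idx)
  (T I : eqType) (r : seq T) (f : T -> I) (F : T -> R) :
  \big[op/idx]_(x <- r) F x =
  \big[op/idx]_(i <- undup (map f r)) \big[op/idx]_(x <- r | f x == i) F x.
Proof.
symmetry; rewrite (exchange_big_dep xpredT) //=.
apply: eq_big_seq => x xr.
rewrite (eq_bigl (fun i => i == f x)); last by move=> i; rewrite eq_sym.
by rewrite big_pred1_seq ?undup_uniq // mem_undup map_f.
Qed.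

Section Combinations.
Variables (K : numFieldType) (X : topologicalLmodType K).
Implicit Types (S Z : set X) (s t : seq (X * K)).

Definition lcomb s : X := \sum_(p <- s) p.2 *: p.1.
Definition lcombF (F : X -> X) s : X := \sum_(p <- s) p.2 *: F p.1.
Definition coef s (c : X) : K := \sum_(p <- s | p.1 == c) p.2.
Definition vecs_in S s := forall p, p \in s -> S p.1.
Definition scale_seq (a : K) s := [seq (p.1, a * p.2) | p <- s].

Lemma lcomb_cat s t : lcomb (s ++ t) = lcomb s + lcomb t.
Proof. by rewrite /lcomb big_cat. Qed.

Lemma coef_cat s t c : coef (s ++ t) c = coef s c + coef t c.
Proof. by rewrite /coef big_cat. Qed.

Lemma lcombF_scale F a s : lcombF F (scale_seq a s) = a *: lcombF F s.
Proof.
rewrite /lcombF /scale_seq big_map scaler_sumr; apply: eq_bigr => p _.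
by rewrite scalerA.
Qed.

Lemma lcomb_scale a s : lcomb (scale_seq a s) = a *: lcomb s.
Proof. exact: (lcombF_scale id). Qed.

Lemma coef_scale a s c : coef (scale_seq a s) c = a * coef s c.
Proof. by rewrite /coef /scale_seq big_map mulr_sumr. Qed.

Lemma lcombF_lcomb F s : lcombF F s = lcomb [seq (F p.1, p.2) | p <- s].
Proof. by rewrite /lcombF /lcomb big_map. Qed.

Lemma vecs_in_nil S : vecs_in S [::].
Proof. by []. Qed.

Lemma vecs_in_cat S s t : vecs_in S s -> vecs_in S t -> vecs_in S (s ++ t).
Proof. by move=> hs ht p; rewrite mem_cat => /orP[/hs|/ht]. Qed.

Lemma vecs_in_scale S a s : vecs_in S s -> vecs_in S (scale_seq a s).
Proof. by move=> hs p; rewrite /scale_seq => /mapP[q /hs ? ->]. Qed.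

Lemma vecs_inS S Z s : S `<=` Z -> vecs_in S s -> vecs_in Z s.
Proof. by move=> SZ hs p ps; apply/SZ/hs. Qed.

Lemma lcombF_group F s :
  lcombF F s = \sum_(c <- undup (map fst s)) coef s c *: F c.
Proof.
rewrite /lcombF (big_partition_undup _ _ fst); apply: eq_bigr => c _.
by rewrite /coef scaler_suml; apply: eq_bigr => p /eqP ->.
Qed.

Lemma lcomb_group s : lcomb s = \sum_(c <- undup (map fst s)) coef s c *: c.
Proof. exact: (lcombF_group id). Qed.

Lemma coef_notin s c : c \notin map fst s -> coef s c = 0.
Proof.
move=> cn; rewrite /coef big1_seq // => p /andP[/eqP pc ps].
by move: cn; rewrite -pc map_f.
Qed.

Lemma coef_map_fst (f : X -> X) s c :
  coef [seq (f p.1, p.2) | p <- s] c =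
  \sum_(d <- undup (map fst s) | f d == c) coef s d.
Proof.
rewrite /coef big_map big_mkcond (big_partition_undup _ _ fst) [RHS]big_mkcond.
apply: eq_bigr => d _; case: eqP => [fdc|nfdc].
  by apply: eq_bigr => p /eqP ->; rewrite fdc eqxx.
by rewrite big1 // => p /eqP ->; case: eqP.
Qed.

Lemma lspan_lcomb S y : lspan S y <-> exists s, vecs_in S s /\ y = lcomb s.
Proof.
split.
  move=> [n [v [c [Sv ->]]]]; exists [seq (v i, c i) | i <- enum 'I_n].
  by split; [move=> p /mapP[i _ ->]; exact: Sv | rewrite /lcomb big_map big_enum].
move=> [s [Ss ->]].
exists (size s), (fun i => (nth (0, 0) s i).1), (fun i => (nth (0, 0) s i).2).
split; first by move=> i; apply/Ss/mem_nth.
by rewrite /lcomb (big_nth (0, 0)) big_mkord.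
Qed.

Lemma lin_indepP S : lin_indep S <->
  forall s, vecs_in S s -> lcomb s = 0 -> forall c, coef s c = 0.
Proof.
split=> [hS s Ss s0 c|hS n v c vinj Sv s0 i].
  set u := undup (map fst s).
  have [cu|cnu] := boolP (c \in u); last by apply: coef_notin; rewrite -mem_undup.
  have inj : injective (fun i : 'I_(size u) => nth 0 u i).
    by move=> i j /eqP; rewrite nth_uniq ?undup_uniq // => /eqP /val_inj.
  have Su (i : 'I_(size u)) : S (nth 0 u i).
    by move: (mem_nth 0 (ltn_ord i)); rewrite /u mem_undup => /mapP[p /Ss ? ->].
  have := hS (size u) _ (fun i => coef s (nth 0 u i)) inj Su.
  have -> : \sum_(i < size u) coef s (nth 0 u i) *: nth 0 u i = lcomb s.
    by rewrite lcomb_group (big_nth 0) big_mkord.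
  have ci : (index c u < size u)%N by rewrite index_mem.
  by move=> /(_ s0 (Ordinal ci)); rewrite /= nth_index.
have := hS [seq (v j, c j) | j <- enum 'I_n] _ _ (v i).
rewrite /coef big_map big_enum_cond /= (eq_bigl (pred1 i)) ?big_pred1_eq.
  apply; first by move=> p /mapP [j _ ->]; exact: Sv.
  by rewrite /lcomb big_map big_enum.
by move=> j; rewrite /= inj_eq.
Qed.

Lemma lin_indepS S1 S2 : S1 `<=` S2 -> lin_indep S2 -> lin_indep S1.
Proof. by move=> S12 h2 n v c vinj S1v; apply: h2 => // i; apply/S12/S1v. Qed.

Lemma lsubspaceD Z x y : lsubspace Z -> Z x -> Z y -> Z (x + y).
Proof. by move=> [_ h] zx zy; have := h 1 x y zx zy; rewrite scale1r. Qed.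

Lemma lsubspaceZ Z a x : lsubspace Z -> Z x -> Z (a *: x).
Proof. by move=> [z0 h] zx; have := h a x 0 zx z0; rewrite addr0. Qed.

Lemma lsubspaceB Z x y : lsubspace Z -> Z x -> Z y -> Z (x - y).
Proof.
by move=> hZ zx zy; apply: lsubspaceD; rewrite // -scaleN1r; apply: lsubspaceZ.
Qed.

Lemma lsubspace_lcomb Z s : lsubspace Z -> vecs_in Z s -> Z (lcomb s).
Proof.
move=> hZ; elim: s => [|p s IH] hs; first by rewrite /lcomb big_nil; case: hZ.
rewrite /lcomb big_cons; apply: lsubspaceD => //.
  by apply: lsubspaceZ => //; apply: hs; rewrite inE eqxx.
by apply: IH => q qs; apply: hs; rewrite inE qs orbT.
Qed.

Lemma lspan_min Z S : lsubspace Z -> S `<=` Z -> lspan S `<=` Z.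
Proof.
move=> hZ SZ y /lspan_lcomb [s [Ss ->]]; apply: lsubspace_lcomb => //.
exact: vecs_inS Ss.
Qed.

Lemma lspan_lsubspace S : lsubspace (lspan S).
Proof.
split; first by apply/lspan_lcomb; exists [::]; rewrite /lcomb big_nil.
move=> a x y /lspan_lcomb[s [Ss ->]] /lspan_lcomb[t [St ->]].
apply/lspan_lcomb; exists (scale_seq a s ++ t); split.
  by apply: vecs_in_cat => //; exact: vecs_in_scale.
by rewrite lcomb_cat lcomb_scale.
Qed.

Lemma sub_lspan S : S `<=` lspan S.
Proof.
move=> x Sx; apply/lspan_lcomb; exists [:: (x, 1)]; split.
  by move=> p; rewrite inE => /eqP ->.
by rewrite /lcomb big_seq1 scale1r.
Qed.

Lemma lspanS S Z : S `<=` Z -> lspan S `<=` lspan Z.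
Proof. by move=> SZ; apply: lspan_min (@lspan_lsubspace Z) _ => x /SZ /sub_lspan. Qed.

Lemma lspan0 : lspan set0 = [set 0 : X].
Proof.
apply/seteqP; split; last by move=> x ->; case: (@lspan_lsubspace set0).
by apply: lspan_min => //; split => // a x y -> ->; rewrite scaler0 addr0.
Qed.

Lemma lcomb_split (a : pred (X * K)) s :
  lcomb s = lcomb [seq p <- s | a p] + lcomb [seq p <- s | ~~ a p].
Proof. by rewrite /lcomb !big_filter [LHS](bigID a). Qed.

Lemma coef_split (a : pred (X * K)) s c :
  coef s c = coef [seq p <- s | a p] c + coef [seq p <- s | ~~ a p] c.
Proof.
rewrite /coef !big_filter_cond [LHS](bigID a).
by congr (_ + _); apply: eq_bigl => p; rewrite andbC.
Qed.

Lemma vecs_in_image (F : X -> X) (Q : set X) s : vecs_in (F @` Q) s ->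
  exists2 s', vecs_in Q s' & s = [seq (F p.1, p.2) | p <- s'].
Proof.
move=> Fs; have [pre hpre] := partial_choice (fun h c => Q c /\ F c = h) 0.
have {}hpre p : p \in s -> Q (pre p.1) /\ F (pre p.1) = p.1.
  by move=> /Fs [c Qc Fc]; apply: hpre; exists c.
exists [seq (pre p.1, p.2) | p <- s]; first by move=> _ /mapP [p /hpre [? _] ->].
by rewrite -map_comp -[LHS]map_id; apply/eq_in_map => -[x k] /hpre [_ /= ->].
Qed.

Lemma lcomb_lspan S s : vecs_in S s -> lspan S (lcomb s).
Proof. by move=> Ss; apply/lspan_lcomb; exists s. Qed.

Lemma lspan_setU S1 S2 x : lspan (S1 `|` S2) x ->
  exists2 x1, lspan S1 x1 & lspan S2 (x - x1).
Proof.
move=> /lspan_lcomb [s [Ss ->]]; pose a := fun p : X * K => `[< S1 p.1 >].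
exists (lcomb [seq p <- s | a p]).
  by apply: lcomb_lspan => p; rewrite mem_filter => /andP [/asboolP].
rewrite [X in X - _](lcomb_split a) addrC addKr; apply: lcomb_lspan => p.
by rewrite mem_filter => /andP [/asboolPn nS1 /Ss [//|]].
Qed.

Lemma lin_indep_setU S1 S2 : lin_indep S1 -> lin_indep S2 ->
  (forall x, lspan S1 x -> lspan S2 x -> x = 0) -> lin_indep (S1 `|` S2).
Proof.
move=> /lin_indepP h1 /lin_indepP h2 h12; apply/lin_indepP => s Ss s0 c.
pose a := fun p : X * K => `[< S1 p.1 >].
have o1 : vecs_in S1 [seq p <- s | a p] by move=> p; rewrite mem_filter => /andP [/asboolP].
have o2 : vecs_in S2 [seq p <- s | ~~ a p].
  by move=> p; rewrite mem_filter => /andP [/asboolPn nS1 /Ss [//|]].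
have e : lcomb [seq p <- s | a p] = - lcomb [seq p <- s | ~~ a p].
  by apply/eqP; rewrite -addr_eq0 -lcomb_split s0.
have z1 : lcomb [seq p <- s | a p] = 0.
  apply: h12; first exact: lcomb_lspan.
  by rewrite e -scaleN1r -lcomb_scale; apply: lcomb_lspan; apply: vecs_in_scale.
have z2 : lcomb [seq p <- s | ~~ a p] = 0 by apply/eqP; rewrite -oppr_eq0 -e z1.
by rewrite (coef_split a) (h1 _ o1 z1) (h2 _ o2 z2) addr0.
Qed.

Lemma lin_indep_lspan_meet S S1 S2 x : lin_indep S -> S1 `<=` S -> S2 `<=` S ->
  S1 `&` S2 = set0 -> lspan S1 x -> lspan S2 x -> x = 0.
Proof.
move=> /lin_indepP hS S1S S2S S12 /lspan_lcomb [r1 [or1 ->]] /lspan_lcomb [r2 [or2 e]].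
have o : vecs_in S (r1 ++ scale_seq (-1) r2).
  apply: vecs_in_cat; first exact: vecs_inS S1S or1.
  by apply: vecs_in_scale; apply: vecs_inS S2S or2.
have s0 : lcomb (r1 ++ scale_seq (-1) r2) = 0.
  by rewrite lcomb_cat lcomb_scale -e scaleN1r subrr.
rewrite lcomb_group big1_seq // => c /andP [_]; rewrite mem_undup => /mapP [p /or1 S1c ->].
have : coef r2 p.1 = 0.
  apply: coef_notin; apply/mapP => -[q /or2 S2q pq].
  have : (S1 `&` S2) p.1 by split; rewrite // pq.
  by rewrite S12.
move=> c2; have := hS _ o s0 p.1; rewrite coef_cat coef_scale c2 mulr0 addr0 => ->.
by rewrite scale0r.
Qed.

End Combinations.

(** * Triangular perturbations of a basis *)

Definition perturb (K : numFieldType) (X : lmodType K)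
  (beta : X -> X) (tau : X -> K) (c : X) : X := beta c + tau c *: c.

Section Triangular.
Variables (K : numFieldType) (X : topologicalLmodType K).
Variables (B B0 P : set X) (beta : X -> X) (lv : X -> nat) (tau : X -> K).
Hypotheses (hB : lin_indep B) (PB : P `<=` B) (B0B : B0 `<=` B)
  (PB0 : forall c, P c -> ~ B0 c) (betaB : forall c, P c -> B (beta c))
  (lv_beta : forall c, P c -> (lv (beta c) < lv c)%N)
  (tau_neq0 : forall c, P c -> tau c != 0).
Let u := perturb beta tau.

(* At a [c] of maximal level with a nonzero coefficient in [s], the expansion
   of [lcomb t + lcombF u s] over [B] has coefficient [tau c * coef s c]. *)
Lemma triangular_coef0 s t : vecs_in P s -> vecs_in B0 t ->
  lcomb t + lcombF u s = 0 -> forall c, coef s c = 0.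
Proof.
move=> Ps Bt e0 c0; apply/eqP; apply: contraT => nz.
have /seq_argmax : has (fun c => coef s c != 0) (map fst s).
  by apply/hasP; exists c0 => //; apply: contraNT nz => /coef_notin ->.
move=> /(_ lv) [c /andP [cs cnz] cmax].
have Pc : P c by move: cs => /mapP [p /Ps Pp ->].
pose T := t ++ [seq (beta p.1, p.2) | p <- s] ++ [seq (p.1, tau p.1 * p.2) | p <- s].
have BT : vecs_in B T.
  apply: vecs_in_cat; first exact: vecs_inS Bt.
  by apply: vecs_in_cat => _ /mapP [q /Ps Pq ->]; [apply: betaB|apply: PB].
have T0 : lcomb T = 0.
  rewrite -e0 /T !lcomb_cat; congr (_ + _).
  rewrite /lcomb /lcombF !big_map -big_split /=; apply: eq_bigr => q _.
  by rewrite /u /perturb scalerDr scalerA mulrC.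
have := (lin_indepP B).1 hB T BT T0 c; rewrite /T !coef_cat.
have -> : coef t c = 0.
  by apply: coef_notin; apply/mapP => -[q /Bt Bq cq]; apply: (PB0 Pc); rewrite cq.
have -> : coef [seq (beta p.1, p.2) | p <- s] c = 0.
  rewrite coef_map_fst big1_seq // => d /andP [/eqP bdc]; rewrite mem_undup => ds.
  have Pd : P d by move: ds => /mapP [q /Ps Pq ->].
  apply/eqP; apply: contraT => dnz.
  by have := leq_trans (lv_beta Pd) (cmax d ds dnz); rewrite bdc ltnn.
have -> : coef [seq (p.1, tau p.1 * p.2) | p <- s] c = tau c * coef s c.
  by rewrite /coef big_map mulr_sumr; apply: eq_bigr => p /= /eqP ->.
by rewrite !add0r => /eqP; rewrite mulf_eq0 (negbTE (tau_neq0 Pc)) (negbTE cnz).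
Qed.

Lemma perturb_lcomb0 s t : vecs_in P s -> vecs_in B0 t ->
  lcomb t + lcombF u s = 0 -> lcombF u s = 0.
Proof.
move=> Ps Bt e0; rewrite lcombF_group big1 // => c _.
by rewrite (triangular_coef0 Ps Bt e0) scale0r.
Qed.

Lemma perturb_inj c c' : P c -> P c' -> u c = u c' -> c = c'.
Proof.
move=> Pc Pc' e; pose s : seq (X * K) := [:: (c, 1); (c', -1)].
have Ps : vecs_in P s by move=> p; rewrite !inE => /orP [/eqP ->|/eqP ->].
have e0 : lcomb [::] + lcombF u s = 0.
  by rewrite /lcomb /lcombF big_nil add0r big_cons big_seq1 /= e scale1r scaleN1r subrr.
have := triangular_coef0 Ps (vecs_in_nil _) e0 c.
rewrite /coef !big_cons big_nil /= eqxx; have [//|_] := eqVneq c' c.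
by move=> /eqP; rewrite addr0 oner_eq0.
Qed.

Lemma lin_indep_perturb : lin_indep (u @` P).
Proof.
apply/lin_indepP => _ /vecs_in_image [s Ps ->] s0 c.
have e0 : lcomb [::] + lcombF u s = 0 by rewrite /lcomb big_nil add0r lcombF_lcomb.
by rewrite coef_map_fst big1_seq // => d _; apply: triangular_coef0 Ps (vecs_in_nil _) e0 d.
Qed.

Lemma lspan_perturb_meet x : lspan B0 x -> lspan (u @` P) x -> x = 0.
Proof.
move=> /lspan_lcomb [t [Bt ->]] /lspan_lcomb [_ [/vecs_in_image [s Ps ->] e]].
have e0 : lcomb (scale_seq (-1) t) + lcombF u s = 0.
  by rewrite lcomb_scale lcombF_lcomb -e scaleN1r addNr.
by rewrite e -(lcombF_lcomb u); apply: (perturb_lcomb0 Ps _ e0); apply: vecs_in_scale.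
Qed.

End Triangular.

(** * Density *)

Section Topology.
Variables (K : numFieldType) (X : topologicalLmodType K).
Implicit Types (Y Z B : set X).

Lemma closure_lsubspace Z : lsubspace Z -> lsubspace (closure Z).
Proof.
move=> hZ; split; first by apply: subset_closure; case: hZ.
move=> a x y cx cy V Vn.
have [[B1 B2] /= [nB1 nB2] BV] := @add_continuous X (a *: x, y) V Vn.
have [[C1 C2] /= [nC1 nC2] CB] := @scale_continuous K X (a, x) B1 nB1.
have [v [Zv C2v]] := cx _ nC2.
have [w [Zw B2w]] := cy _ nB2.
exists (a *: v + w); split; first by case: hZ => _; apply.
apply: (BV (a *: v, w)); split => //=.
by apply: (CB (a, v)); split => //=; exact: nbhs_singleton.
Qed.

Lemma dense_of_closure Y B Z : dense Y -> Y `<=` lspan B ->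
  lsubspace Z -> B `<=` closure Z -> dense Z.
Proof.
move=> dY YB hZ BZ O O0 oO; have [y [Oy Yy]] := dY O O0 oO.
have /(_ O) [] : closure Z y by apply: (lspan_min (closure_lsubspace hZ) BZ); exact: YB.
  exact: open_nbhs_nbhs.
by move=> z [Zz Oz]; exists z.
Qed.

Lemma small_multiple (U : set X) (c : X) : nbhs 0 U ->
  exists t : K, t != 0 /\ U (t *: c).
Proof.
move=> U0; have := @scale_continuous K X (0, c) U; rewrite /= scale0r.
move=> /(_ U0) [[C1 C2]] /= [/nbhs_ballP [e /= e0 eC1] nC2] CU.
exists (e / 2); split; first by apply: lt0r_neq0; rewrite divr_gt0.
apply: (CU (e / 2, c)); split => /=; last exact: nbhs_singleton.
apply: eC1; rewrite /ball /= sub0r normrN gtr0_norm ?divr_gt0 ?ltr0n //.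
by rewrite ltr_pdivrMr ?ltr0n // ltr_pMr // ltr1n.
Qed.

Lemma closure_of_shifts Z (b : X) (U : nat -> set X) (d : nat -> X) :
  (forall V, nbhs 0 V -> exists n, U n `<=` V) ->
  (forall n, U n (d n)) -> (forall n, Z (b + d n)) -> closure Z b.
Proof.
move=> Ub Ud Zd V Vb; have := @add_continuous X (b, 0) V; rewrite /= addr0.
move=> /(_ Vb) [[B1 B2]] /= [nB1 nB2] BV; have [n Un] := Ub _ nB2.
exists (b + d n); split => //; apply: (BV (b, d n)); split => /=.
  exact: nbhs_singleton.
exact: Un.
Qed.

End Topology.

(** * The family of dense subspaces *)

Section Construction.
Variables (K : numFieldType) (X : topologicalLmodType K) (A : Type).
Variables (U : nat -> set X) (Y B BW B0 : set X).
Variables (b0 : A -> X) (code : A * A * nat * nat -> X) (dec : X -> A * A * nat * nat).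
Variable tau : X -> K.
Hypotheses (Ainf : infinite_set [set: A]) (Ub : forall V, nbhs 0 V -> exists n, U n `<=` V)
  (hB : hamel_basis Y B) (dY : dense Y) (hBW : lin_indep BW) (BWA : (BW #<= [set: A])%card)
  (B0B : B0 `<=` B) (BWB0 : BW `<=` lspan B0)
  (b0B : forall a, B (b0 a)) (b0surj : forall b, B b -> exists a, b0 a = b)
  (codeB : forall q, B (code q)) (codeB0 : forall q, ~ B0 (code q)) (codeK : cancel code dec)
  (tau_small : forall c, tau c != 0 /\ U (dec c).1.2 (tau c *: c)).

Definition level (c : X) : nat :=
  if pselect (exists q, code q = c) then (dec c).2.+1 else 0.

(* [psi a k n] sits one level above [b0 a] = [beta (psi a k n)]. *)
Definition psi a k n := code (a, k, n, level (b0 a)).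

Definition fiber k (c : X) := exists a n, c = psi a k n.

Definition psi_range (c : X) := exists k, fiber k c.

Definition beta (c : X) := b0 (dec c).1.1.1.

Definition subspace_family k := lspan (BW `|` perturb beta tau @` fiber k).

Let u := perturb beta tau.
Let Z := subspace_family.

Lemma level_code q : level (code q) = q.2.+1.
Proof.
rewrite /level; case: pselect => [h|nq]; first by rewrite codeK.
by case: nq; exists q.
Qed.

Lemma psi_inj a k n a' k' n' : psi a k n = psi a' k' n' -> [/\ a = a', k = k' & n = n'].
Proof. by move=> /(can_inj codeK) [-> -> -> _]. Qed.

Lemma beta_psi a k n : beta (psi a k n) = b0 a.
Proof. by rewrite /beta codeK. Qed.

Lemma perturb_psi a k n : u (psi a k n) = b0 a + tau (psi a k n) *: psi a k n.
Proof. by rewrite /u /perturb beta_psi. Qed.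

Lemma psi_rangeB c : psi_range c -> B c.
Proof. by move=> [k [a [n ->]]]; apply: codeB. Qed.

Lemma psi_rangeNB0 c : psi_range c -> ~ B0 c.
Proof. by move=> [k [a [n ->]]]; apply: codeB0. Qed.

Lemma beta_psi_rangeB c : psi_range c -> B (beta c).
Proof. by move=> [k [a [n ->]]]; rewrite beta_psi. Qed.

Lemma level_beta c : psi_range c -> (level (beta c) < level c)%N.
Proof. by move=> [k [a [n ->]]]; rewrite beta_psi level_code. Qed.

Lemma tau_psi_range c : psi_range c -> tau c != 0.
Proof. by move=> _; case: (tau_small c). Qed.

Let Bind : lin_indep B := proj1 (proj2 hB).

Lemma lin_indep_perturb_range : lin_indep (u @` psi_range).
Proof.
exact: (lin_indep_perturb Bind psi_rangeB B0B psi_rangeNB0 beta_psi_rangeB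
  level_beta tau_psi_range).
Qed.

Lemma lspan_perturb_range_meet x :
  lspan B0 x -> lspan (u @` psi_range) x -> x = 0.
Proof.
exact: (lspan_perturb_meet Bind psi_rangeB B0B psi_rangeNB0 beta_psi_rangeB
  level_beta tau_psi_range).
Qed.

Lemma perturb_range_inj c c' : psi_range c -> psi_range c' -> u c = u c' -> c = c'.
Proof.
exact: (perturb_inj Bind psi_rangeB B0B psi_rangeNB0 beta_psi_rangeB
  level_beta tau_psi_range).
Qed.

Lemma fiber_range k : fiber k `<=` psi_range.
Proof. by move=> c Pc; exists k. Qed.

Lemma perturb_fiber_range k : u @` fiber k `<=` u @` psi_range.
Proof. by move=> _ [c Pc <-]; exists c => //; apply: fiber_range Pc. Qed.

Lemma lspan_sub_family k : lspan BW `<=` Z k.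
Proof. by apply: lspanS => x BWx; left. Qed.

Lemma family_sub_Y k : Z k `<=` Y.
Proof.
have [_ [_ <-]] := hB; apply: lspan_min; first exact: lspan_lsubspace.
move=> x [/BWB0|[c /(@fiber_range k) Pc <-]]; first exact: lspanS.
have hsp := @lspan_lsubspace _ _ B.
apply: (lsubspaceD hsp); first exact/sub_lspan/beta_psi_rangeB.
by apply: (lsubspaceZ _ hsp); apply/sub_lspan/psi_rangeB.
Qed.

Lemma family_dense k : dense (Z k).
Proof.
have [_ [_ YB]] := hB.
apply: (dense_of_closure dY (B := B)); [by rewrite YB|exact: lspan_lsubspace|].
move=> _ /b0surj [a <-].
apply: (closure_of_shifts (d := fun n => tau (psi a k n) *: psi a k n) Ub).
  by move=> n; have [_] := tau_small (psi a k n); rewrite codeK.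
move=> n; rewrite -perturb_psi; apply: sub_lspan; right.
by exists (psi a k n) => //; exists a, n.
Qed.

Lemma perturb_fiber_disjoint k1 k2 : k1 <> k2 ->
  u @` fiber k1 `&` u @` fiber k2 = set0.
Proof.
move=> k12; rewrite -subset0 => _ [[c Pc <-] [c' Pc' /esym e]].
have := perturb_range_inj (fiber_range Pc) (fiber_range Pc') e.
by move: Pc Pc' => [a [n ->]] [a' [n' ->]] /psi_inj [_ /k12].
Qed.

Lemma family_meet k1 k2 : k1 <> k2 -> Z k1 `&` Z k2 = lspan BW.
Proof.
move=> k12; apply/seteqP; split; last by move=> x Wx; split; apply: lspan_sub_family.
move=> x [/lspan_setU [x1 W1 P1] /lspan_setU [x2 W2 P2]].
have PS k := lspanS (@perturb_fiber_range k).
have e : (x - x1) - (x - x2) = 0.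
  apply: lspan_perturb_range_meet.
    have hW := @lspan_lsubspace _ _ B0; have WB0 := lspan_min hW BWB0.
    by rewrite opprB addrC addrA subrK; apply: (lsubspaceB hW); apply: WB0.
  by apply: (lsubspaceB (@lspan_lsubspace _ _ _)); [apply: (PS k1)|apply: (PS k2)].
have y0 : x - x1 = 0.
  apply: (lin_indep_lspan_meet lin_indep_perturb_range (@perturb_fiber_range k1)
    (@perturb_fiber_range k2) (perturb_fiber_disjoint k12)) => //.
  by move/eqP: e; rewrite subr_eq0 => /eqP ->.
by move/eqP: y0; rewrite subr_eq0 => /eqP ->.
Qed.

Lemma family_basis k : hamel_basis (Z k) (BW `|` u @` fiber k).
Proof.
split; first exact: sub_lspan.
split => //; apply: lin_indep_setU => //.
  exact: lin_indepS (@perturb_fiber_range k) lin_indep_perturb_range.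
move=> x /(lspan_min (@lspan_lsubspace _ _ B0) BWB0) xB0 /(lspanS (@perturb_fiber_range k)).
exact: lspan_perturb_range_meet.
Qed.

Lemma family_basis_card k : (BW `|` u @` fiber k #= [set: A])%card.
Proof.
apply: Cantor_Bernstein.
  apply: card_setU_le => //; apply: card_le_trans (card_image_le u (fiber k)) _.
  have [enc encinj] := code_injection Ainf.
  have fiber_code : fiber k `<=` code @` [set: A * A * nat * nat].
    by move=> _ [a [n ->]]; exists (a, k, n, level (b0 a)).
  apply: card_le_trans (subset_card_le fiber_code) _.
  apply: card_le_trans (card_image_le _ _) _.
  by apply: (@card_le_inj_into _ _ _ _ enc); split => // x y _ _ /encinj.
apply: (@card_le_inj_into _ _ _ _ (fun a => u (psi a k 0%N))); split.
  by move=> a _; right; exists (psi a k 0%N) => //; exists a, 0%N.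
move=> a a' _ _ /perturb_range_inj e.
have [] // := psi_inj (e (ex_intro _ k (ex_intro _ a (ex_intro _ 0%N erefl)))
                         (ex_intro _ k (ex_intro _ a' (ex_intro _ 0%N erefl)))).
Qed.

Lemma family_dim k : has_dim (Z k) A.
Proof.
split; first exact: lspan_lsubspace.
by exists (BW `|` u @` fiber k); split; [exact: family_basis|exact: family_basis_card].
Qed.

Lemma subspace_family_spec :
  (forall k, [/\ has_dim (Z k) A, dense (Z k), lspan BW `<=` Z k & Z k `<=` Y]) /\
  (forall k1 k2, k1 <> k2 -> Z k1 `&` Z k2 = lspan BW).
Proof.
split=> [k|]; last exact: family_meet.
by split; [exact: family_dim|exact: family_dense|exact: lspan_sub_family|exact: family_sub_Y].
Qed.

End Construction.

Theorem dense_subspace_family (K : numFieldType) (X : topologicalLmodType K) (A : Type)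
  (U : nat -> set X) (Y B BW B0 : set X) :
  infinite_set [set: A] -> (forall n, nbhs 0 (U n)) ->
  (forall V, nbhs 0 V -> exists n, U n `<=` V) ->
  hamel_basis Y B -> (B #= [set: A])%card -> dense Y ->
  lin_indep BW -> (BW #<= [set: A])%card ->
  B0 `<=` B -> BW `<=` lspan B0 -> ~ ([set: A] #<= B0)%card ->
  exists Z : A -> set X,
    (forall k, [/\ has_dim (Z k) A, dense (Z k), lspan BW `<=` Z k & Z k `<=` Y]) /\
    (forall k1 k2, k1 <> k2 -> Z k1 `&` Z k2 = lspan BW).
Proof.
move=> Ainf U0 Ub hB BA dY hBW BWA B0B BWB0 nAB0.
have [b0 [[b0B _] b0surj]] := card_eq_bij 0 (card_esym BA).
have [iota [iotaB iotainj]] := inj_into_card_le 0 (card_setD_ge Ainf BA nAB0).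
have [enc encinj] := code_injection Ainf.
pose code q := iota (enc q).
have [a0 _] := infinite_setN0 Ainf.
have code_inj : injective code by move=> q q' /(iotainj _ _ I I) /encinj.
have [dec codeK] := inj_left_inverse (a0, a0, 0%N, 0%N) code_inj.
have [tau tau_small] := choice (fun c => small_multiple c (U0 (dec c).1.2)).
exists (subspace_family BW b0 code dec tau).
apply: (subspace_family_spec (U := U) (B := B) (B0 := B0)) => //.
- by move=> a; apply: b0B.
- by move=> b /b0surj [a _ <-]; exists a.
- by move=> q; have [] := iotaB (enc q) I.
- by move=> q; have [] := iotaB (enc q) I.
Qed.

(** * Lineability *)

Section Lineability.
Variables (K : numFieldType) (X : topologicalLmodType K) (A : Type).
Hypotheses (Ainf : infinite_set [set: A]) (fcX : first_countable X).

Lemma lin_indep0 : lin_indep (@set0 X).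
Proof. by move=> n v c _ Hv _ i; case: (Hv i). Qed.

Lemma lin_indep1 (x : X) : lin_indep [set y | y = x /\ x != 0].
Proof.
move=> n v c vinj Hv s0 i; have [vi nx] := Hv i.
have all_i j : j = i by apply: vinj; have [-> _] := Hv j; rewrite vi.
move: s0; rewrite (eq_bigl (pred1 i)) => [|j]; last by rewrite /= (all_i j) eqxx.
by rewrite big_pred1_eq vi => /eqP; rewrite scaler_eq0 (negbTE nx) orbF => /eqP.
Qed.

Lemma not_card_le_unit : ~ ([set: A] #<= [set: unit])%card.
Proof. by move=> /card_le_finite h; apply: Ainf; apply: h; exact: finite_finset. Qed.

Lemma small_support (G : Type) (Y B BW : set X) :
  hamel_basis Y B -> BW `<=` Y -> (BW #<= [set: G])%card ->
  ~ ([set: A] #<= [set: G])%card ->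
  exists B0, [/\ B0 `<=` B, BW `<=` lspan B0 & ~ ([set: A] #<= B0)%card].
Proof.
move=> [_ [_ BY]] BWY BWG nAG.
have [rep hrep] := partial_choice (fun (w : X) s => vecs_in B s /\ w = lcomb s) [::].
have {}hrep w : BW w -> vecs_in B (rep w) /\ w = lcomb (rep w).
  by move=> /BWY; rewrite -BY => /lspan_lcomb ?; apply: hrep.
have Ffin w : BW w -> finite_set [set` map fst (rep w)] by move=> _; exact: finite_seq.
exists (\bigcup_(w in BW) [set` map fst (rep w)]); split.
- by move=> c [w /hrep [Bw _] /mapP [p /Bw ? ->]].
- move=> w BWw; apply/lspan_lcomb; exists (rep w); split; last exact: (hrep w BWw).2.
  by move=> p ps; exists w => //; apply: map_f.
have [Gfin|Ginf] := pselect (finite_set [set: G]).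
  move=> /card_le_finite AB0; apply: Ainf; apply: AB0.
  by apply: bigcup_finite => //; exact: card_le_finite BWG Gfin.
by move=> AB0; apply: nAG; apply: card_le_trans AB0 (card_bigcup_finite_le Ginf BWG Ffin).
Qed.

Lemma good_subspace_family (M : set X) (G : Type) (Y BW : set X) :
  good_subspace M A Y -> lin_indep BW -> BW `<=` Y ->
  (BW #<= [set: G])%card -> ~ ([set: A] #<= [set: G])%card ->
  exists Z : A -> set X,
    (forall k, good_subspace M A (Z k) /\ lspan BW `<=` Z k) /\
    (forall k1 k2, k1 <> k2 -> Z k1 `&` Z k2 = lspan BW).
Proof.
move=> [[_ [B [hB BA]]] [dY YM]] hBW BWY BWG nAG.
have [U [U0 Ub]] := fcX 0.
have [B0 [B0B BWB0 nAB0]] := small_support hB BWY BWG nAG.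
have BWA : (BW #<= [set: A])%card.
  by case: (card_le_total [set: A] [set: G]) => // /(card_le_trans BWG).
have [Z [hZ Zmeet]] := dense_subspace_family Ainf U0 Ub hB BA dY hBW BWA B0B BWB0 nAB0.
exists Z; split => // k; have [hd dZ WZ ZY] := hZ k.
by split => //; split => //; split => // z /ZY /YM.
Qed.

Lemma dense_lineable_infP (M : set X) :
  dense_lineable A M <-> inf_dense_lineable A M.
Proof.
have [a0 _] := infinite_setN0 Ainf.
split=> [[Y hY]|[Y [hY _]]]; last by exists (Y a0).
have [Z [hZ Zmeet]] :=
  good_subspace_family hY lin_indep0 (sub0set _) (card_ge0 _ _) not_card_le_unit.
exists Z; split; first by move=> k; case: (hZ k).
by move=> k1 k2 /Zmeet ->; exact: lspan0.
Qed.

Lemma pointwise_dense_lineable_infP (M : set X) :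
  pointwise_dense_lineable A M <-> inf_pointwise_dense_lineable A M.
Proof.
have [a0 _] := infinite_setN0 Ainf.
split=> h x Mx; last by have [Y [hY _]] := h x Mx; exists (Y a0); exact: hY.
have [Y [hY Yx]] := h x Mx; pose BW := [set y | y = x /\ x != 0].
have BWx : lspan BW = lspan [set x].
  apply/seteqP; split; first by apply: lspanS => y [-> _].
  apply: lspan_min (@lspan_lsubspace _ _ _) _ => _ ->.
  have [->|nx] := eqVneq x 0; last exact: sub_lspan.
  by case: (@lspan_lsubspace _ _ BW).
have BW1 : (BW #<= [set: unit])%card.
  by apply: (@card_le_inj_into _ _ _ _ (fun=> tt)); split => // y y' [-> _] [-> _].
have BWY : BW `<=` Y by move=> y [-> _].
have [Z [hZ Zmeet]] :=
  good_subspace_family hY (lin_indep1 (x := x)) BWY BW1 not_card_le_unit.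
rewrite BWx in hZ Zmeet; exists Z; split => // k; have [gZ WZ] := hZ k.
by split => //; apply/WZ/sub_lspan.
Qed.

Lemma gamma_alpha_dense_lineable_infP (G : Type) (M : set X) :
  ~ ([set: A] #<= [set: G])%card ->
  gamma_alpha_dense_lineable G A M <-> inf_gamma_alpha_dense_lineable G A M.
Proof.
move=> nAG; have [a0 _] := infinite_setN0 Ainf.
split=> -[lin h]; split => // W hW WM; last first.
  by have [Y [hY _]] := h W hW WM; exists (Y a0); exact: hY.
have [Y [hY WY]] := h W hW WM.
have [_ [BW [[BWW [hBW <-]] /card_eqPle [BWG _]]]] := hW.
have [Z [hZ Zmeet]] := good_subspace_family hY hBW (subset_trans BWW WY) BWG nAG.
by exists Z.
Qed.

End Lineability.

Theorem corollary_general (K : numFieldType) : corollary_for K.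
Proof.
move=> X M A _ fcX Ainf; split; first exact: dense_lineable_infP.
split; first exact: pointwise_dense_lineable_infP.
by move=> G _; exact: gamma_alpha_dense_lineable_infP.
Qed.

Theorem corollary3p7 (R : realType) :
  corollary_for R /\ corollary_for (R[i])%C.
Proof. by split; apply: corollary_general. Qed.
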